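(* Let $n=2^k$ and let $G$ be a random graph drawn from $\mathcal G(n,\tfrac12)$ on vertex set $\{0,1\}^k$. Then with probability tending to $1$ as $n\to\infty$, the following property P holds: for every $U\subseteq V(G)$ with $|U|\le \tfrac13 k$ and every pattern $p$ with $|p|\le\tfrac13 k$, there is at least one vertex in $N(U)$ consistent with $p$.
   Context: $\mathcal G(n,\tfrac12)$: each pair of vertices is an edge independently with probability $1/2$. Vertices are identified with binary strings $v=v_1\cdots v_k$. A pattern is a string $p=p_1\cdots p_k\in\{*,0,1\}^k$; $p$ is consistent with vertex $v$ if for every $i$, $p_i=v_i$ or $p_i=*$; $|p|$ is the number of positions with $p_i\in\{0,1\}$. For $v\in V(G)$, $N(v)=\{u:\{u,v\}\in E(G)\}$, and for $U\subseteq V(G)$, $N(U)=\bigcap_{v\in U}N(v)$ (the common neighbours of all vertices of $U$; for $U=\emptyset$ this is $V(G)$). *)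

From mathcomp Require Import all_boot.
From Stdlib Require Import Reals.

Set Implicit Arguments.
Unset Strict Implicit.
Unset Printing Implicit Defensive.

Definition vertex (k : nat) := {ffun 'I_k -> bool}.

Definition pairs (k : nat) : {set {set vertex k}} :=
  [set e : {set vertex k} | #|e| == 2].

Definition is_graph (k : nat) (E : {set {set vertex k}}) : bool :=
  E \subset pairs k.

Definition adj (k : nat) (E : {set {set vertex k}}) (u v : vertex k) : bool :=
  [set u; v] \in E.

(* N(U) = common neighbours of all vertices of U (= V(G) for U empty). *)
Definition commonN (k : nat) (E : {set {set vertex k}}) (U : {set vertex k})
  : {set vertex k} :=
  [set w | [forall u in U, adj E u w]].

(* Patterns p in {*,0,1}^k: None = *, Some b = b. *)
Definition pattern (k : nat) := {ffun 'I_k -> option bool}.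

Definition consistent (k : nat) (p : pattern k) (v : vertex k) : bool :=
  [forall i, (p i == None) || (p i == Some (v i))].

Definition psize (k : nat) (p : pattern k) : nat :=
  #|[set i | p i != None]|.

(* Property P ( |U| <= k/3 and |p| <= k/3, written as 3|U| <= k, 3|p| <= k ). *)
Definition propP (k : nat) (E : {set {set vertex k}}) : bool :=
  [forall U : {set vertex k}, (3 * #|U| <= k) ==>
    [forall p : pattern k, (3 * psize p <= k) ==>
      [exists v, (v \in commonN E U) && consistent p v]]].

(* In G(n,1/2) every labelled graph on the n vertices has probability
   2^-(#pairs), so the probability of P is a ratio of counts. *)
Definition probP (k : nat) : R :=
  (INR #|[set E : {set {set vertex k}} | is_graph E && propP E]|
   / INR (2 ^ #|pairs k|))%R.

(* Fix U and p, and let W be the set of vertices outside U consistent with p, so that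
   |W| >= 2^(k-|p|) - |U|.  A graph has no vertex of N(U) consistent with p iff every
   w in W misses some edge to U; these events concern the pairwise disjoint stars
   {{u, w} | u in U}, so they hold for exactly a fraction (1 - 2^-|U|)^|W| of all graphs.
   As (1 - 1/a)^a <= 1/2 and |U|, |p| <= k/3, this fraction is at most 2^-(2^(k/3) - 1),
   which beats the at most (2^k + 1)^(k/3) 3^k choices of (U, p): by the union bound,
   P fails with probability at most 2^-(k/3). *)

From mathcomp Require Import all_boot zify.
From Stdlib Require Import Reals Lra.
(* Reals rebinds [^] on nat to [Nat.pow]; re-importing ssrnat restores [expn]. *)
From mathcomp Require Import ssrnat.

Set Implicit Arguments.
Unset Strict Implicit.
Unset Printing Implicit Defensive.

(* E |-> (E :|: S, E :&: S) maps X bijectively onto [set E in X | S \subset E] * powerset S. *)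
Lemma card_invariant_outside (T : finType) (X : {set {set T}}) (S : {set T}) :
  (forall E F, E :\: S = F :\: S -> (E \in X) = (F \in X)) ->
  #|X| = #|[set E in X | S \subset E]| * 2 ^ #|S|.
Proof.
move=> X_outside.
have setUDK E : (E :|: S) :\: S = E :\: S by rewrite setDUl setDv setU0.
pose phi E := (E :|: S, E :&: S).
have phi_inj : {in X &, injective phi}.
  move=> E F _ _ [EF_US EF_IS].
  by rewrite -(setID E S) -(setID F S) -setUDK -(setUDK F) EF_US EF_IS.
rewrite -(card_in_imset phi_inj) -card_powerset -cardsX.
apply: eq_card => -[F B]; rewrite !inE /=; apply/imsetP/idP.
- move=> [E EX [-> ->]].
  by rewrite subsetUr subsetIr (X_outside _ E) ?EX ?setUDK.
- move=> /andP[/andP[FX SF] BS]; exists (F :\: S :|: B).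
  + rewrite (X_outside _ F) // setDUl setDDl setUid.
    by move: BS; rewrite -setD_eq0 => /eqP ->; rewrite setU0.
  + congr pair; apply/setP => x; rewrite !inE;
    move/implyP: (subsetP SF x); move/implyP: (subsetP BS x);
    by case: (x \in B); case: (x \in S); case: (x \in F).
Qed.

Lemma leq_expn2r m n e : m <= n -> m ^ e <= n ^ e.
Proof. by move=> le_mn; case: e => [|e] //; rewrite leq_exp2r. Qed.

Lemma bernoulli_expnS x n : x ^ n.+1 + n.+1 * x ^ n <= (x + 1) ^ n.+1.
Proof.
elim: n => [|n IHn]; first by rewrite !expn1 expn0; lia.
rewrite [(x + 1) ^ _]expnS; apply: leq_trans (leq_mul (leqnn (x + 1)) IHn).
rewrite !expnS; nia.
Qed.

Lemma double_predn_expn_le a : 0 < a -> 2 * (a - 1) ^ a <= a ^ a.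
Proof.
case: a => // b _; rewrite subn1 /=.
have := bernoulli_expnS b b; rewrite addn1.
have : b ^ b.+1 <= b.+1 * b ^ b by rewrite expnS leq_mul2r leqnSn orbT.
lia.
Qed.

(* (1 - 1/a)^a <= 1/2, raised to the power t. *)
Lemma predn_expn_decay a m t : 0 < a -> a * t <= m -> (a - 1) ^ m * 2 ^ t <= a ^ m.
Proof.
move=> a_gt0 le_at_m; rewrite -(subnKC le_at_m) !expnD mulnAC.
apply: leq_mul; last exact/leq_expn2r/leq_subr.
by rewrite !expnM -expnMn mulnC; apply/leq_expn2r/double_predn_expn_le.
Qed.

Lemma poly_le_exp2 j : 10 <= j -> 3 * j * j + 10 * j + 5 <= 2 ^ j.
Proof.
elim: j => // j IHj; rewrite leq_eqVlt => /orP[/eqP <- // | lt9j].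
by have := IHj lt9j; rewrite expnS; nia.
Qed.

Lemma union_bound_small k : 30 <= k ->
  (2 ^ k).+1 ^ (k %/ 3) * 3 ^ k * 2 ^ (k %/ 3) <= 2 ^ (2 ^ (k %/ 3) - 1).
Proof.
move=> le30k; set j := k %/ 3.
have le10j : 10 <= j by rewrite /j; lia.
have le_k_3j : k <= 3 * j + 2 by rewrite /j; lia.
have vertices_le : (2 ^ k).+1 <= 2 ^ (3 * j + 3).
  apply: leq_trans (_ : 2 ^ k.+1 <= _); last by rewrite leq_exp2l //; lia.
  by rewrite expnS mul2n -addnn -addn1 leq_add2l expn_gt0.
have patterns_le : 3 ^ k <= 2 ^ (6 * j + 4).
  apply: leq_trans (@leq_expn2r 3 4 k isT) _.
  by rewrite (_ : 4 = 2 ^ 2) // -expnM leq_exp2l //; lia.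
apply: leq_trans (_ : 2 ^ ((3 * j + 3) * j) * 2 ^ (6 * j + 4) * 2 ^ j <= _).
  by rewrite leq_mul2r leq_mul ?orbT // expnM leq_expn2r.
by rewrite -!expnD leq_exp2l //; have := poly_le_exp2 le10j; nia.
Qed.

Section Stars.

Variable T : finType.
Implicit Types U W : {set T}.

Definition unordered_pairs : {set {set T}} := [set e : {set T} | #|e| == 2].

Definition star (U : {set T}) (w : T) : {set {set T}} := [set [set u; w] | u in U].

Definition no_common_nbr (U W : {set T}) : {set {set {set T}}} :=
  [set E : {set {set T}} | (E \subset unordered_pairs) &&
     [forall w in W, exists u in U, [set u; w] \notin E]].

Section OneStar.

Variables (U : {set T}) (w : T).
Hypothesis wU : w \notin U.

Lemma card_star : #|star U w| = #|U|.
Proof.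
apply: card_in_imset => u v uU vU uw_vw.
have : u \in [set v; w] by rewrite -uw_vw !inE eqxx.
rewrite !inE => /orP[/eqP // | /eqP uw].
by move: wU; rewrite -uw uU.
Qed.

Lemma star_sub_pairs : star U w \subset unordered_pairs.
Proof.
apply/subsetP => _ /imsetP[u uU ->]; rewrite inE cards2.
by case: (u =P w) => [uw | //]; move: wU; rewrite -uw uU.
Qed.

Lemma notin_star u v : v \notin U -> v != w -> [set u; v] \notin star U w.
Proof.
move=> vU vw; apply/imsetP => -[x xU uv_xw].
have : v \in [set x; w] by rewrite -uv_xw !inE eqxx orbT.
rewrite !inE (negPf vw) orbF => /eqP vx.
by move: vU; rewrite vx xU.
Qed.

Lemma star_subsetE (E : {set {set T}}) :
  (star U w \subset E) = [forall u in U, [set u; w] \in E].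
Proof.
apply/subsetP/forall_inP => [starE u uU | uwE _ /imsetP[u uU ->]].
- exact/starE/imset_f.
- exact: uwE.
Qed.

Lemma no_common_nbrD1 (W : {set T}) : w \in W ->
  no_common_nbr U W =
  [set E in no_common_nbr U (W :\ w) | ~~ (star U w \subset E)].
Proof.
move=> wW; apply/setP => E; rewrite !inE star_subsetE negb_forall_in -andbA.
congr andb; apply/forall_inP/andP => [allW | [/forall_inP allW' Pw] v vW].
- by split; [apply/forall_inP => v /setD1P[_]; apply: allW | apply: allW].
- case: (v =P w) => [-> // | /eqP vw].
  by apply: allW'; rewrite !inE vw vW.
Qed.

Lemma no_common_nbr_outside_star (W : {set T}) :
  w \notin W -> [disjoint U & W] ->
  forall E F, E :\: star U w = F :\: star U w ->
  (E \in no_common_nbr U W) = (F \in no_common_nbr U W).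
Proof.
move=> wW dUW E F EF.
have pairs_outside (G : {set {set T}}) :
    (G \subset unordered_pairs) = (G :\: star U w \subset unordered_pairs).
  by rewrite subDset (setUidPr star_sub_pairs).
have memEF (x : {set T}) : x \notin star U w -> (x \in E) = (x \in F).
  move=> xS; have := congr1 (fun A : {set {set T}} => x \in A) EF.
  by rewrite /= !inE xS.
rewrite !inE pairs_outside EF -pairs_outside; congr andb.
apply: eq_forallb_in => v vW; apply: eq_existsb => u; rewrite memEF //.
rewrite notin_star ?(disjointFl dUW vW) //.
by apply: contraNneq wW => <-.
Qed.

End OneStar.

(* Removing w from W: whether E lies in [no_common_nbr U (W :\ w)] does not depend on
   the star of w, so a fraction 2^-|U| of these graphs contains that whole star. *)
Lemma card_no_common_nbr U W : [disjoint U & W] ->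
  #|no_common_nbr U W| * (2 ^ #|U|) ^ #|W| =
  2 ^ #|unordered_pairs| * (2 ^ #|U| - 1) ^ #|W|.
Proof.
have [n] : exists n, #|W| = n by exists #|W|.
elim: n W => [|n IHn] W cardW dUW.
  move/cards0_eq: cardW => ->; rewrite cards0 !expn0 !muln1 -card_powerset.
  apply: eq_card => E; rewrite !inE; case: (E \subset _) => //=.
  by apply/forall_inP => v; rewrite inE.
have /card_gt0P[w wW] : 0 < #|W| by rewrite cardW.
have wU : w \notin U by rewrite (disjointFl dUW wW).
have cardW' : #|W :\ w| = n by move: cardW; rewrite (cardsD1 w) wW => -[].
have dUW' : [disjoint U & W :\ w] by apply: disjointWr dUW; apply: subsetDl.
have wW' : w \notin W :\ w by rewrite !inE eqxx.
set X := no_common_nbr U (W :\ w).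
have X_split := card_invariant_outside (no_common_nbr_outside_star wU wW' dUW').
rewrite card_star // -/X in X_split.
have X_part : #|[set E in X | star U w \subset E]| +
              #|[set E in X | ~~ (star U w \subset E)]| = #|X|.
  rewrite -(cardsID [set E : {set {set T}} | star U w \subset E] X).
  by congr (_ + _); apply: eq_card => E; rewrite !inE andbC.
have := IHn _ cardW' dUW'.
rewrite cardW' cardW (no_common_nbrD1 U wW) -/X !expnS.
move: X_split X_part; set Y := #|[set E in X | _]|; set Z := #|[set E in X | _]|.
have : 0 < 2 ^ #|U| by rewrite expn_gt0.
set a := 2 ^ #|U| => a_gt0 X_split X_part X_IH.
have Z_a : Z * a = (a - 1) * #|X| by nia.
by rewrite mulnA Z_a -mulnA X_IH mulnCA.
Qed.

End Stars.

Lemma leq_card_bigcup (I T : finType) (P : pred I) (A : I -> {set T}) :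
  #|\bigcup_(i | P i) A i| <= \sum_(i | P i) #|A i|.
Proof.
elim/big_rec2: _ => [|i B n _ le_Bn]; first by rewrite cards0.
by apply: leq_trans (leq_card_setU _ _) _; rewrite leq_add2l.
Qed.

Lemma card_small_subsets (T : finType) j :
  #|[set U : {set T} | #|U| <= j]| <= #|T|.+1 ^ j.
Proof.
pose g (f : {ffun 'I_j -> option T}) := [set x | [exists i, f i == Some x]].
apply: leq_trans (_ : #|g @: [set: {ffun 'I_j -> option T}]| <= _); last first.
  apply: leq_trans (leq_imset_card _ _) _.
  by rewrite cardsT card_ffun card_option card_ord.
apply/subset_leq_card/subsetP => U; rewrite inE => cardU.
apply/imsetP; exists [ffun i : 'I_j => nth None [seq Some x | x <- enum U] i].
  by rewrite inE.
apply/setP => x; rewrite inE; apply/idP/existsP => [xU | [i]].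
- have ix : index x (enum U) < j.
    by apply: leq_trans cardU; rewrite cardE index_mem mem_enum.
  exists (Ordinal ix); rewrite ffunE /= (nth_map x) ?index_mem ?mem_enum //.
  by rewrite nth_index ?mem_enum.
- rewrite ffunE; case: (ltnP i (size (enum U))) => [lt_iU | le_Ui].
  + by rewrite (nth_map x) // => /eqP[<-]; rewrite -mem_enum mem_nth.
  + by rewrite nth_default ?size_map.
Qed.

Lemma card_consistent k (p : pattern k) :
  #|[set v : vertex k | consistent p v]| = 2 ^ (k - psize p).
Proof.
pose F (i : 'I_k) := if p i is Some b then pred1 b else predT.
have -> : #|[set v : vertex k | consistent p v]| =
          #|(finfun.family F : simpl_pred (vertex k))|.
  apply: eq_card => v; rewrite inE; apply/forallP/familyP => pv i; move: (pv i);
  rewrite /F; case: (p i) => [b|] //=.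
  - by move/eqP=> [->]; rewrite inE.
  - by rewrite inE => /eqP ->.
rewrite card_family foldrE big_image /= (bigID (fun i => p i == None)) /=.
rewrite (eq_bigr (fun _ => 2)); last by move=> i /eqP; rewrite /F => ->; rewrite card_bool.
rewrite [X in _ * X](eq_bigr (fun _ => 1)); last first.
  by move=> i; rewrite /F; case: (p i) => // b _; rewrite card1.
rewrite !prod_nat_const exp1n muln1; congr (2 ^ _).
rewrite -[k in k - _](card_ord k) -(cardsC [set i | p i != None]) -/(psize p) addKn.
by apply: eq_card => i; rewrite !inE negbK.
Qed.

Definition lacks_nbr k (U : {set vertex k}) (p : pattern k)
  : {set {set {set vertex k}}} :=
  [set E | is_graph E && ~~ [exists v, (v \in commonN E U) && consistent p v]].

Lemma lacks_nbr_sub k (U : {set vertex k}) (p : pattern k) :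
  lacks_nbr U p \subset no_common_nbr U ([set v | consistent p v] :\: U).
Proof.
apply/subsetP => E; rewrite !inE => /andP[graphE /existsPn noNbr].
apply/andP; split; first exact: graphE.
apply/forall_inP => w; rewrite !inE => /andP[wU pw].
move: (noNbr w); rewrite pw andbT inE negb_forall_in => /exists_inP[u uU uw].
by apply/exists_inP; exists u.
Qed.

Lemma card_lacks_nbr k (U : {set vertex k}) (p : pattern k) :
  3 * #|U| <= k -> 3 * psize p <= k ->
  #|lacks_nbr U p| * 2 ^ (2 ^ (k %/ 3) - 1) <= 2 ^ #|pairs k|.
Proof.
move=> smallU smallp; set W := [set v | consistent p v] :\: U.
have dUW : [disjoint U & W].
  by rewrite disjoint_subset; apply/subsetP => v; rewrite !inE => ->.
have := card_no_common_nbr dUW.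
have : 0 < 2 ^ #|U| by rewrite expn_gt0.
set a := 2 ^ #|U|; set m := #|W| => a_gt0 card_ncn.
have le_at_m : a * (2 ^ (k %/ 3) - 1) <= m.
  have le_W : 2 ^ (k - psize p) - #|U| <= m.
    rewrite /m /W cardsD -card_consistent leq_sub2l //.
    exact/subset_leq_card/subsetIr.
  have le_Ua : #|U| <= a by apply/ltnW; rewrite ltn_expl.
  have : 2 ^ (#|U| + k %/ 3) <= 2 ^ (k - psize p) by rewrite leq_exp2l //; lia.
  rewrite mulnBr muln1 /a -expnD; lia.
apply: leq_trans (leq_mul (subset_leq_card (lacks_nbr_sub U p)) (leqnn _)) _.
have am_gt0 : 0 < a ^ m by rewrite expn_gt0 a_gt0.
rewrite -(leq_pmul2r am_gt0) mulnAC card_ncn -mulnA leq_mul2l.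
by rewrite predn_expn_decay ?orbT.
Qed.

Definition small_params k : {set {set vertex k} * pattern k} :=
  [set x : {set vertex k} * pattern k | (3 * #|x.1| <= k) && (3 * psize x.2 <= k)].

Lemma card_small_params k : #|small_params k| <= (2 ^ k).+1 ^ (k %/ 3) * 3 ^ k.
Proof.
have small_sub : small_params k \subset
    setX [set U : {set vertex k} | #|U| <= k %/ 3] [set: pattern k].
  by apply/subsetP => -[U p]; rewrite !inE /= andbT => /andP[? _]; lia.
apply: leq_trans (subset_leq_card small_sub) _; rewrite cardsX cardsT.
apply: leq_mul; last by rewrite card_ffun card_option card_bool card_ord.
by apply: leq_trans (card_small_subsets _ _) _; rewrite card_ffun card_bool card_ord.
Qed.

Definition bad_graphs k : {set {set {set vertex k}}} :=
  [set E | is_graph E && ~~ propP E].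

Lemma bad_graphs_sub k :
  bad_graphs k \subset \bigcup_(x in small_params k) lacks_nbr x.1 x.2.
Proof.
apply/subsetP => E; rewrite inE => /andP[graphE].
move=> /forall_inPn[U smallU /forall_inPn[p smallp noNbr]].
by apply/bigcupP; exists (U, p); rewrite !inE /= ?graphE //; apply/andP.
Qed.

Lemma card_bad_graphs k : 30 <= k -> #|bad_graphs k| * 2 ^ (k %/ 3) <= 2 ^ #|pairs k|.
Proof.
move=> le30k; set t := 2 ^ (2 ^ (k %/ 3) - 1).
have t_gt0 : 0 < t by rewrite expn_gt0.
have bad_le : #|bad_graphs k| * t <= #|small_params k| * 2 ^ #|pairs k|.
  apply: leq_trans (leq_mul (subset_leq_card (bad_graphs_sub k)) (leqnn t)) _.
  apply: leq_trans (leq_mul (leq_card_bigcup _ _) (leqnn t)) _.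
  rewrite big_distrl -sum_nat_const; apply: leq_sum => -[U p].
  by rewrite inE => /andP[]; apply: card_lacks_nbr.
have params_le : #|small_params k| * 2 ^ (k %/ 3) <= t.
  exact: leq_trans (leq_mul (card_small_params k) (leqnn _)) (union_bound_small le30k).
rewrite -(leq_pmul2r t_gt0).
apply: leq_trans (_ : #|small_params k| * 2 ^ #|pairs k| * 2 ^ (k %/ 3) <= _).
  by rewrite mulnAC leq_mul2r bad_le orbT.
by rewrite mulnAC [X in _ <= X]mulnC leq_mul2r params_le orbT.
Qed.

Lemma card_good_bad_graphs k :
  #|[set E : {set {set vertex k}} | is_graph E && propP E]| + #|bad_graphs k| =
  2 ^ #|pairs k|.
Proof.
rewrite -card_powerset -(cardsID [set E | propP E] (powerset (pairs k))).
by congr (_ + _); apply: eq_card => E; rewrite !inE andbC.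
Qed.

Lemma Nat_pow_expn m n : Nat.pow m n = m ^ n.
Proof. by elim: n => [|n IHn] //; rewrite expnS -IHn. Qed.

Section RatioBound.
Local Open Scope R_scope.

Lemma dist_ratio_le (G B j : nat) : (0 < G + B)%N -> (B * 2 ^ j <= G + B)%N ->
  R_dist (INR G / INR (G + B)) 1 <= (1 / 2) ^ j.
Proof.
move=> /ltP/lt_0_INR D_pos /leP; rewrite -Nat_pow_expn => /le_INR.
rewrite mult_INR pow_INR; rewrite plus_INR in D_pos * => le_B2j_D.
have pow2_pos : 0 < INR 2 ^ j by apply: pow_lt; rewrite /=; lra.
have half_pow : (1 / 2) ^ j * INR 2 ^ j = 1.
  by rewrite -Rpow_mult_distr (_ : 1 / 2 * INR 2 = 1) ?pow1 //=; field.
rewrite /R_dist (_ : INR G / (INR G + INR B) - 1 = - (INR B / (INR G + INR B)));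
  last by field; lra.
set D := INR G + INR B in D_pos le_B2j_D *.
have ratio_le : INR B / D <= (1 / 2) ^ j.
  apply: (Rmult_le_reg_r (D * INR 2 ^ j)); first exact: Rmult_lt_0_compat.
  have -> : INR B / D * (D * INR 2 ^ j) = INR B * INR 2 ^ j by field; lra.
  by rewrite -Rmult_assoc (Rmult_comm _ D) Rmult_assoc half_pow Rmult_1_r.
have ratio_ge0 : 0 <= INR B / D.
  by apply: Rmult_le_pos; [apply: pos_INR | apply/Rlt_le/Rinv_0_lt_compat].
by rewrite Rabs_Ropp Rabs_pos_eq.
Qed.
End RatioBound.

Theorem mainTheorem5 : Un_cv probP 1%R.
Proof.
move=> eps eps_gt0.
have half_lt1 : (Rabs (1 / 2) < 1)%R by rewrite Rabs_pos_eq; lra.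
have [N half_pow_small] := pow_lt_1_zero _ half_lt1 _ eps_gt0.
exists (3 * N + 30)%N => k /leP le_k.
rewrite /probP Nat_pow_expn -card_good_bad_graphs.
apply: Rle_lt_trans (dist_ratio_le (j := k %/ 3) _ _) _.
- by rewrite card_good_bad_graphs expn_gt0.
- by rewrite card_good_bad_graphs; apply: card_bad_graphs; lia.
- by apply: Rle_lt_trans (RRle_abs _) (half_pow_small _ _); apply/leP; lia.
Qed.
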